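(* Let $I$ be a finite set, $T$ a tree on $I$ with $n$ inner vertices, fix a nice total order on $\mathcal{V}(T)$ with associated edge-labeling $\lambda$, and let $\hat{0}=x_0\lhd x_1\lhd\dots\lhd x_n=T$ be the unique maximal chain of $[\hat{0},T]$ with increasing labels. For $j\in[n]$ let $\mathsf{B}_j$ be the set of atoms $a$ of $[\hat{0},T]$ with $\lambda(\hat{0},a)=j$. Let $i\in[n]$ and, for each $j\in[i]$, let $a_j\in\mathsf{B}_j$. Then $x_i=a_1\vee a_2\vee\dots\vee a_i$.
   Context: A tree on a finite set $I$ is a (non-planar) rooted binary tree whose leaves are bijectively labeled by $I$: vertices are inner vertices (valence $3$) and leaves and the root (valence $1$), edges oriented towards the root; one-leaf trees are allowed. A forest on $I$ is a set of trees whose leaf sets partition $I$; $\mathcal{V}(F)$ is its set of inner vertices. For forests $F,G$ on $I$, $F \leq G$ if there is a continuous map $F\to G$ which (D1) is increasing with respect to orientation towards the root, (D2) maps inner vertices to inner vertices injectively, (D3) is the identity of $I$ on leaves, (D4) is injective on each tree of $F$. This gives the poset $\operatorname{For}(I)$, graded by number of inner vertices, with minimum $\hat{0}$ (no inner vertices); $[\hat{0},T]$ is a lattice with join $\vee$. For $F \leq G \leq T$ inner vertices are regarded as subsets $\mathcal{V}(F)\subseteq\mathcal{V}(G)\subseteq\mathcal{V}(T)$; if $F\lhd G$ there is a unique $v$ with $\mathcal{V}(G)=\mathcal{V}(F)\cup\{v\}$. Partial order on $\mathcal{V}(T)$: $v\preceq v'$ if $v'$ lies on the path between the root and $v$. A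 nice total order is any total order on $\mathcal{V}(T)$ extending $\preceq$; using it the inner vertices are labeled $1,\dots,n$ increasingly and identified with their labels. The edge-labeling is $\lambda(F,G)$ := the unique element of $\mathcal{V}(G)\setminus\mathcal{V}(F)$ for $F\lhd G$ in $[\hat{0},T]$. Atoms are the elements covering $\hat{0}$; a chain is increasing if its sequence of labels is increasing. *)

(* Combinatorial encoding of forests on a finite set I:
   a forest is given by the set of leaf-sets ("clusters") of its inner
   vertices. *)
From mathcomp Require Import all_boot.
Set Implicit Arguments. Unset Strict Implicit. Unset Printing Implicit Defensive.

Definition nodes (I : finType) (H : {set {set I}}) : {set {set I}} :=
  H :|: [set [set x] | x : I].

Definition children (I : finType) (H : {set {set I}}) (A : {set I})
  : {set {set I}} :=
  [set C in nodes H | (C \proper A) &&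
     [forall D in nodes H, (C \proper D) ==> ~~ (D \proper A)]].

Definition roots (I : finType) (H : {set {set I}}) : {set {set I}} :=
  [set C in nodes H | [forall D in nodes H, ~~ (C \proper D)]].

Definition laminar (I : finType) (H : {set {set I}}) : bool :=
  [forall A in H, forall B in H,
     [|| A \subset B, B \subset A | [disjoint A & B]]].

(* A forest on I (binary, rooted, non-planar, leaves labelled by I),
   encoded by the family of leaf sets of its inner vertices. *)
Definition is_forest (I : finType) (H : {set {set I}}) : bool :=
  [forall A in H, 1 < #|A|] && laminar H &&
  [forall A in H, #|children H A| == 2].

Definition is_tree (I : finType) (H : {set {set I}}) : bool :=
  is_forest H && (#|roots H| == 1).

(* phi : V(F) -> V(G) is the restriction to inner vertices of a map F -> G
   satisfying (D1)-(D4): injective on inner vertices, each inner vertex is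
   sent to an inner vertex lying above all its leaves, and the two branches
   at an inner vertex are sent into the two distinct branches at its image. *)
Definition embedding (I : finType) (F G : {set {set I}})
    (phi : {set I} -> {set I}) : Prop :=
  {in F &, injective phi} /\
  forall A, A \in F ->
    [/\ phi A \in G, A \subset phi A &
      exists A1 A2 B1 B2,
        [/\ children F A = [set A1; A2], A1 != A2,
            [&& B1 \in children G (phi A), B2 \in children G (phi A)
              & B1 != B2] & (A1 \subset B1) && (A2 \subset B2)]].

Definition le_forest (I : finType) (F G : {set {set I}}) : Prop :=
  exists phi, embedding F G phi.

Definition covers (I : finType) (F G : {set {set I}}) : Prop :=
  [/\ is_forest F, is_forest G, le_forest F G, F != G &
      forall Z, is_forest Z -> le_forest F Z -> le_forest Z G ->
        Z = F \/ Z = G].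

(* A nice total order on V(T), given directly by the associated increasing
   labelling lab : V(T) -> {1,...,n} (a bijection), extending the partial
   order v <= v' iff v' lies on the path from the root to v, i.e. the
   leaf set of v is contained in that of v'. *)
Definition nice_labeling (I : finType) (T : {set {set I}}) (n : nat)
    (lab : {set I} -> nat) : Prop :=
  [/\ #|T| = n, {in T &, injective lab},
      (forall v, v \in T -> 0 < lab v <= n) &
      (forall v w, v \in T -> w \in T -> v \proper w -> lab v < lab w)].

(* Edge label lambda(F,G) = j for F <| G in [0,T]: with V(F), V(G) viewed as
   subsets of V(T) via the maps F -> T, G -> T, V(G) = V(F) + {v}, lab v = j. *)
Definition is_label (I : finType) (T : {set {set I}}) (lab : {set I} -> nat)
    (F G : {set {set I}}) (j : nat) : Prop :=
  exists phiF phiG v,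
    [/\ embedding F T phiF, embedding G T phiG, v \notin phiF @: F,
        phiG @: G = v |: (phiF @: F) & j = lab v].

Definition is_join_in (I : finType) (T : {set {set I}})
    (a : nat -> {set {set I}}) (i : nat) (x : {set {set I}}) : Prop :=
  [/\ is_forest x, le_forest x T,
      (forall j, 0 < j <= i -> le_forest (a j) x) &
      (forall y, is_forest y -> le_forest y T ->
          (forall j, 0 < j <= i -> le_forest (a j) y) -> le_forest x y)].

From mathcomp Require Import all_boot zify.
Set Implicit Arguments. Unset Strict Implicit. Unset Printing Implicit Defensive.

(* An embedding of a forest into the forest T is unique when it exists, so an
   element of [0,T] is determined by its image in V(T), a downward closed set
   of vertices.  Embeddings are moreover rigid: if the image contains every
   vertex of T strictly below v, then the preimage of v is v itself, with the
   same children.  The increasing chain is forced to carry the labels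
   1, ..., n, so x_i is the down-set of the vertices labelled at most i.  An
   atom of B_j has as only inner vertex the vertex labelled j, so it lies
   below x_i when j <= i; and by uniqueness of embeddings any upper bound of
   a_1, ..., a_i has every vertex labelled at most i in its image, hence lies
   above x_i by rigidity. *)

Section Forests.
Variable I : finType.
Implicit Types (H F G T S : {set {set I}}) (A B C D v w : {set I}).

Lemma forest_card_gt1 H A : is_forest H -> A \in H -> 1 < #|A|.
Proof. by case/andP=> /andP[/forallP card_gt1 _] _ AH; have := card_gt1 A; rewrite AH. Qed.

Lemma forest_laminar H : is_forest H -> laminar H.
Proof. by case/andP=> /andP[]. Qed.

Lemma forest_children2 H A : is_forest H -> A \in H ->
  exists C1 C2, C1 != C2 /\ children H A = [set C1; C2].
Proof. by case/andP=> _ /forallP children2 AH; have := children2 A; rewrite AH => /cards2P. Qed.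

Lemma node_nonempty H C : is_forest H -> C \in nodes H -> exists x, x \in C.
Proof.
move=> fH; rewrite /nodes inE => /orP[CH|/imsetP[x _ ->]]; last by exists x; rewrite inE.
have [C0|[y yC]] := set_0Vmem C; last by exists y.
by have := forest_card_gt1 fH CH; rewrite C0 cards0.
Qed.

Lemma nodes_comparable H C D x : is_forest H -> C \in nodes H -> D \in nodes H ->
  x \in C -> x \in D -> (C \subset D) \/ (D \subset C).
Proof.
move=> fH; rewrite /nodes !inE => /orP[CH|/imsetP[y _ ->]]; last first.
  by move=> _; rewrite inE => /eqP-> xD; left; rewrite sub1set.
case/orP=> [DH|/imsetP[y _ ->]]; last first.
  by move=> xC; rewrite inE => /eqP<-; right; rewrite sub1set.
move=> xC xD; have /forallP/(_ C) := forest_laminar fH; rewrite CH.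
move=> /forallP/(_ D); rewrite DH /= => /or3P[]; [by left | by right |].
by move=> CD; move: (disjointFr CD xC); rewrite xD.
Qed.

Lemma childrenP H A C : C \in children H A ->
  [/\ C \in nodes H, C \proper A &
      forall D, D \in nodes H -> C \proper D -> ~~ (D \proper A)].
Proof.
rewrite inE => /andP[CN /andP[CA /forallP maxC]]; split=> // D DN CD.
by have := maxC D; rewrite DN CD.
Qed.

Lemma child_maximal H A C D : C \in children H A -> D \in nodes H ->
  C \subset D -> D \proper A -> C = D.
Proof.
case/childrenP=> _ _ maxC DN CD DA; apply/eqP; rewrite eqEproper CD.
by apply: contraL DA => /(maxC _ DN).
Qed.

Lemma eq_children_mem H A C C' x : is_forest H ->
  C \in children H A -> C' \in children H A -> x \in C -> x \in C' -> C = C'.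
Proof.
move=> fH Cc C'c xC xC'.
have [CN CA _] := childrenP Cc; have [C'N C'A _] := childrenP C'c.
have [CC'|C'C] := nodes_comparable fH CN C'N xC xC'; first exact: child_maximal Cc C'N CC' C'A.
exact/esym/(child_maximal C'c CN C'C CA).
Qed.

Lemma node_sub_child H A D : D \in nodes H -> D \proper A ->
  exists2 C, C \in children H A & D \subset C.
Proof.
move=> DN DA.
pose P := [pred E | (E \in nodes H) && (D \subset E) && (E \proper A)].
have PD : P D by rewrite /= DN subxx DA.
have [E /= /andP[/andP[EN DE] EA] maxE] := arg_maxnP (fun E : {set I} => #|E|) PD.
exists E => //; rewrite inE EN EA; apply/forallP=> E'; apply/implyP=> E'N.
apply/implyP=> EE'; apply/negP=> E'A.
have := maxE E'; rewrite /= E'N E'A (subset_trans DE (proper_sub EE')).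
by move=> /(_ isT); rewrite leqNgt proper_card.
Qed.

Lemma forest_childrenU H A C1 C2 : is_forest H -> A \in H ->
  children H A = [set C1; C2] -> A = C1 :|: C2.
Proof.
move=> fH AH chA; apply/setP=> x; apply/idP/idP => [xA|].
  have xN : [set x] \in nodes H by rewrite /nodes inE imset_f ?orbT.
  have xA' : [set x] \proper A.
    by rewrite properEcard sub1set xA cards1 (forest_card_gt1 fH AH).
  have [C] := node_sub_child xN xA'; rewrite chA sub1set !inE.
  by case/orP=> /eqP-> ->; rewrite ?orbT.
have subA E : E \in children H A -> E \subset A by case/childrenP=> _ /proper_sub.
by rewrite inE => /orP[] xC; apply: subsetP (subA _ _) _ xC; rewrite chA !inE eqxx ?orbT.
Qed.

Lemma embedding_image_sub F G phi : embedding F G phi -> phi @: F \subset G.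
Proof. by case=> _ e; apply/subsetP=> _ /imsetP[A AF ->]; case: (e A AF). Qed.

Lemma embedding_not_proper F T phi phi' A : is_forest F -> is_forest T ->
  embedding F T phi -> embedding F T phi' -> A \in F -> ~~ (phi A \proper phi' A).
Proof.
move=> fF fT [_ e] [_ e'] AF; apply/negP=> phiA.
have [phiAT A_phi _] := e A AF.
have [_ _ [A1 [A2 [B1 [B2 [chA _ /and3P[B1c B2c nB] /andP[s1 s2]]]]]]] := e' A AF.
have phiAN : phi A \in nodes T by rewrite /nodes inE phiAT.
have [C Cc phiAC] := node_sub_child phiAN phiA.
have inC z : z \in A -> z \in C by move=> zA; apply/(subsetP phiAC)/(subsetP A_phi).
have meetC A' B' : A' \in children F A -> B' \in children T (phi' A) ->
    A' \subset B' -> C = B'.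
  move=> A'c B'c sA'; have [A'N /proper_sub A'A _] := childrenP A'c.
  have [y yA'] := node_nonempty fF A'N.
  exact: eq_children_mem fT Cc B'c (inC _ (subsetP A'A _ yA')) (subsetP sA' _ yA').
have A1c : A1 \in children F A by rewrite chA set21.
have A2c : A2 \in children F A by rewrite chA set22.
have E1 := meetC A1 B1 A1c B1c s1; have E2 := meetC A2 B2 A2c B2c s2.
by rewrite -E1 -E2 eqxx in nB.
Qed.

Lemma embedding_unique F T phi phi' : is_forest F -> is_forest T ->
  embedding F T phi -> embedding F T phi' -> {in F, phi =1 phi'}.
Proof.
move=> fF fT e e' A AF.
have [y yA] : exists y, y \in A by apply: node_nonempty fF _; rewrite /nodes inE AF.
have [phiAT A_phi _] := e.2 A AF; have [phi'AT A_phi' _] := e'.2 A AF.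
have phiAN : phi A \in nodes T by rewrite /nodes inE phiAT.
have phi'AN : phi' A \in nodes T by rewrite /nodes inE phi'AT.
have [sub|sub] := nodes_comparable fT phiAN phi'AN (subsetP A_phi _ yA) (subsetP A_phi' _ yA).
  by apply/eqP; rewrite eqEproper sub (embedding_not_proper fF fT e e' AF).
by apply/esym/eqP; rewrite eqEproper sub (embedding_not_proper fF fT e' e AF).
Qed.

Lemma embedding_comp F G H alpha chi : embedding F G alpha -> embedding G H chi ->
  embedding F H (chi \o alpha).
Proof.
move=> [ia ea] [ic ec]; have alphaG A : A \in F -> alpha A \in G by case/ea.
split=> [A B AF BF /= | A AF].
  by move/(ic _ _ (alphaG _ AF) (alphaG _ BF)); exact: ia.
have [aG Aa [A1 [A2 [B1 [B2 [chA nA /and3P[B1c B2c nB] /andP[s1 s2]]]]]]] := ea A AF.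
have [cH ac [C1 [C2 [D1 [D2 [chB _ /and3P[D1c D2c nD] /andP[t1 t2]]]]]]] := ec _ aG.
split => //=; first exact: subset_trans Aa ac.
move: B1c B2c; rewrite chB !inE => /orP[]/eqP E1 /orP[]/eqP E2.
- by rewrite E1 E2 eqxx in nB.
- exists A1, A2, D1, D2; split => //; first by rewrite D1c D2c nD.
  by rewrite (subset_trans s1) ?E1 // (subset_trans s2) ?E2.
- exists A1, A2, D2, D1; split => //; first by rewrite D1c D2c eq_sym nD.
  by rewrite (subset_trans s1) ?E1 // (subset_trans s2) ?E2.
- by rewrite E1 E2 eqxx in nB.
Qed.

Definition down_closed S T :=
  forall v w, v \in S -> w \in T -> w \proper v -> w \in S.

Section DownClosed.
Variables S T : {set {set I}}.
Hypotheses (sub_ST : S \subset T) (closed_ST : down_closed S T).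

Lemma down_closed_nodes v D : v \in S -> D \proper v ->
  (D \in nodes S) = (D \in nodes T).
Proof.
move=> vS Dv; rewrite /nodes !inE; congr (_ || _).
by apply/idP/idP => [/(subsetP sub_ST) // | DT]; exact: closed_ST vS DT Dv.
Qed.

Lemma down_closed_children v : v \in S -> children S v = children T v.
Proof.
move=> vS; apply/setP=> C; rewrite /children [LHS]in_set [RHS]in_set.
case Cv: (C \proper v); last by rewrite !andbF.
rewrite (down_closed_nodes vS Cv) /=; congr (_ && _); apply: eq_forallb => D.
by case: (boolP (D \proper v)) => Dv; rewrite ?(down_closed_nodes vS Dv) ?implybT.
Qed.

Lemma embedding_restrict F phi : embedding F T phi ->
  (forall A, A \in F -> phi A \in S) -> embedding F S phi.
Proof.
move=> [inj e] phiS; split => // A AF.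
case: (e A AF); rewrite -(down_closed_children (phiS _ AF)) => _ A_phi cherry.
by split => //; exact: phiS.
Qed.

End DownClosed.

Lemma embedding_child_eq G T A v A1 A2 B1 B2 : is_forest G -> is_forest T ->
  (forall w, w \in T -> w \proper v -> w \in G) ->
  A \in G -> A1 \in children G A -> A2 \in children G A ->
  B1 \in children T v -> B2 \in children T v -> B1 != B2 ->
  A1 \subset B1 -> A2 \subset B2 -> A1 = B1.
Proof.
move=> fG fT below AG A1c A2c B1c B2c nB sA1 sA2.
have [A1N /proper_sub A1A _] := childrenP A1c.
have [A2N /proper_sub A2A _] := childrenP A2c.
have [x xA1] := node_nonempty fG A1N; have [y yA2] := node_nonempty fG A2N.
have [B1N B1v _] := childrenP B1c.
have yB1 : y \notin B1.
  apply: contra nB => yB1; apply/eqP.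
  exact: eq_children_mem fT B1c B2c yB1 (subsetP sA2 _ yA2).
move: B1N; rewrite /nodes inE => /orP[B1T|/imsetP[p _ B1E]]; last first.
  rewrite B1E in sA1 *; apply/eqP; rewrite eqEsubset sA1 sub1set.
  by have := subsetP sA1 _ xA1; rewrite inE => /eqP <-.
have B1G : B1 \in nodes G by rewrite /nodes inE below.
have AN : A \in nodes G by rewrite /nodes inE AG.
have [AB1|B1A] := nodes_comparable fG AN B1G (subsetP A1A _ xA1) (subsetP sA1 _ xA1).
  by rewrite (subsetP AB1 _ (subsetP A2A _ yA2)) in yB1.
apply: child_maximal A1c B1G sA1 _; rewrite properE B1A.
by apply: contra yB1 => /subsetP; apply; exact: subsetP A2A _ yA2.
Qed.

Lemma embedding_rigid G T chi v : is_forest G -> is_forest T -> embedding G T chi ->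
  (forall w, w \in T -> w \proper v -> w \in chi @: G) ->
  forall A, A \in G -> chi A = v -> A = v /\ children G A = children T v.
Proof.
move=> fG fT [_ e]; have [k] := ubnP #|v|; elim: k v => // k IH v.
rewrite ltnS => vk image_below A AG chiA.
have below w : w \in T -> w \proper v -> w \in G.
  move=> wT wv; have /imsetP[A0 A0G wE] := image_below w wT wv.
  have image_below_w u : u \in T -> u \proper w -> u \in chi @: G.
    by move=> uT uw; exact: image_below uT (proper_trans uw wv).
  by have [<- _] := IH w (leq_trans (proper_card wv) vk) image_below_w A0 A0G (esym wE).
have [vT _ [A1 [A2 [B1 [B2 [chA _ /and3P[B1c B2c nB] /andP[s1 s2]]]]]]] := e A AG.
rewrite chiA in vT B1c B2c.
have A1c : A1 \in children G A by rewrite chA set21.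
have A2c : A2 \in children G A by rewrite chA set22.
have E1 := embedding_child_eq fG fT below AG A1c A2c B1c B2c nB s1 s2.
have nB' : B2 != B1 by rewrite eq_sym.
have E2 := embedding_child_eq fG fT below AG A2c A1c B2c B1c nB' s2 s1.
have [C1 [C2 [nC chv]]] := forest_children2 fT vT.
have chvE : children T v = [set B1; B2].
  apply/eqP; rewrite eq_sym eqEcard; apply/andP; split.
    by apply/subsetP=> z /set2P[]->.
  by rewrite chv !cards2 nC nB.
rewrite chvE chA E1 E2; split => //.
by rewrite (forest_childrenU fG AG chA) (forest_childrenU fT vT chvE) E1 E2.
Qed.

Lemma embedding_image_eq G T psi S : is_forest G -> is_forest T ->
  embedding G T psi -> down_closed S T -> psi @: G = S -> G = S.
Proof.
move=> fG fT epsi closedS imG; rewrite -imG -{1}(imset_id G).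
apply: eq_in_imset => A AG.
have psiS : psi A \in S by rewrite -imG imset_f.
have image_below w : w \in T -> w \proper psi A -> w \in psi @: G.
  by rewrite imG => wT; exact: closedS psiS wT.
by have [] := embedding_rigid fG fT epsi image_below AG erefl.
Qed.

Lemma down_closed_le S T y chi : is_forest y -> is_forest T -> embedding y T chi ->
  S \subset T -> down_closed S T -> S \subset chi @: y -> le_forest S y.
Proof.
move=> fy fT ech sub_ST closedS S_img; exists id; split => [? ? _ _ //|v vS].
have vT : v \in T by apply: (subsetP sub_ST).
have [A Ay vE] := imsetP (subsetP S_img v vS).
have image_below w : w \in T -> w \proper v -> w \in chi @: y.
  by move=> wT wv; apply: (subsetP S_img); exact: closedS vS wT wv.
have [AE chy] := embedding_rigid fy fT ech image_below Ay (esym vE).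
rewrite AE in Ay chy; split => //.
have [C1 [C2 [nC chC]]] := forest_children2 fT vT.
exists C1, C2, C1, C2; split => //.
- by rewrite (down_closed_children sub_ST closedS vS).
- by rewrite /= chy chC set21 set22 nC.
- by rewrite !subxx.
Qed.

Definition lab_downset T (lab : {set I} -> nat) k := [set v in T | lab v <= k].

Lemma lab_downset_sub T lab k : lab_downset T lab k \subset T.
Proof. by apply/subsetP=> v; rewrite inE => /andP[]. Qed.

Lemma lab_downset_closed T n lab k : nice_labeling T n lab ->
  down_closed (lab_downset T lab k) T.
Proof.
case=> _ _ _ labmon v w; rewrite !inE => /andP[vT vk] wT wv.
by rewrite wT (leq_trans _ vk) // ltnW // labmon.
Qed.

Lemma lab_downset0 T n lab : nice_labeling T n lab -> lab_downset T lab 0 = set0.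
Proof.
case=> _ _ labrng _; apply/setP=> v; rewrite !inE leqn0.
by apply/andP=> -[/labrng/andP[lab_gt0 _] /eqP lab0]; rewrite lab0 in lab_gt0.
Qed.

Lemma lab_downsetS T lab k v : {in T &, injective lab} -> v \in T -> lab v = k.+1 ->
  lab_downset T lab k.+1 = v |: lab_downset T lab k.
Proof.
move=> labinj vT lv; apply/setP=> w; rewrite !inE.
have [->|wv] := eqVneq w v; first by rewrite vT lv leqnn.
have [wT|] //= := boolP (w \in T); rewrite leq_eqVlt ltnS -lv.
by have /negbTE-> : lab w != lab v by apply: contra wv => /eqP/labinj->.
Qed.

Lemma is_label_vertex T lab F G j : is_label T lab F G j ->
  exists2 v, v \in T & lab v = j.
Proof.
case=> phiF [phiG [v [_ eG _ imG ->]]]; exists v => //.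
by apply: (subsetP (embedding_image_sub eG)); rewrite imG setU11.
Qed.

Lemma is_label_image T lab F G j phi : is_forest G -> is_forest T ->
  is_label T lab F G j -> embedding G T phi ->
  exists phiF v, [/\ embedding F T phiF, v \in T, lab v = j & phi @: G = v |: phiF @: F].
Proof.
move=> fG fT [phiF [phiG [v [eF eG _ imG lv]]]] ephi; exists phiF, v; split => //.
  by apply: (subsetP (embedding_image_sub eG)); rewrite imG setU11.
by rewrite -imG; apply: eq_in_imset; exact: embedding_unique fG fT ephi eG.
Qed.

Lemma is_label_atom T lab a j : is_label T lab set0 a j ->
  exists pa v, [/\ embedding a T pa, v \in T, lab v = j & pa @: a = [set v]].
Proof.
case=> phi0 [pa [v [_ ea _ ima lv]]]; rewrite imset0 setU0 in ima.
exists pa, v; split => //.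
by apply: (subsetP (embedding_image_sub ea)); rewrite ima set11.
Qed.

Lemma atom_le_lab_downset T n lab a j k : nice_labeling T n lab ->
  is_label T lab set0 a j -> j <= k -> le_forest a (lab_downset T lab k).
Proof.
move=> nl /is_label_atom[pa [v [ea vT <- ima]]] jk; exists pa.
apply: (embedding_restrict (lab_downset_sub T lab k) (lab_downset_closed nl) ea).
move=> A AA; have : pa A \in [set v] by rewrite -ima imset_f.
by rewrite inE => /eqP->; rewrite inE vT jk.
Qed.

Lemma atom_vertex_in_image T lab a y chi j w : is_forest a -> is_forest T ->
  {in T &, injective lab} -> is_label T lab set0 a j -> le_forest a y ->
  embedding y T chi -> w \in T -> lab w = j -> w \in chi @: y.
Proof.
move=> fa fT labinj /is_label_atom[pa [v [ea vT lv ima]]] [al eal] ech wT lw.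
have /imsetP[A AA vE] : v \in pa @: a by rewrite ima set11.
have -> : w = v by apply: labinj => //; rewrite lw lv.
rewrite vE (embedding_unique fa fT ea (embedding_comp eal ech) AA) /=.
by apply: imset_f; case: (eal.2 A AA).
Qed.

Lemma increasing_bounded_succ n (f : nat -> nat) :
  (forall k, k < n -> 0 < f k <= n) -> (forall k, k.+1 < n -> f k < f k.+1) ->
  forall k, k < n -> f k = k.+1.
Proof.
move=> f_bnd f_incr.
have f_gt k : k < n -> k < f k.
  elim: k => [|k IH] kn; first by case/andP: (f_bnd 0 kn).
  by have := f_incr k kn; have := IH (ltnW kn); lia.
have f_gap d k : k + d < n -> f k + d <= f (k + d).
  elim: d => [|d IH] kd; first by rewrite !addn0.
  have kd' : k + d < n by lia.
  have kd'' : (k + d).+1 < n by lia.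
  by have := IH kd'; have := f_incr _ kd''; rewrite !addnS; lia.
move=> k kn; have kd : k + (n.-1 - k) < n by lia.
by have := f_gt k kn; have := f_gap _ _ kd; have := f_bnd _ kd; lia.
Qed.

Lemma chain_labels_succ T n lab (x : nat -> {set {set I}}) l :
  nice_labeling T n lab ->
  (forall k, k < n -> is_label T lab (x k) (x k.+1) (l k)) ->
  (forall k, k.+1 < n -> l k < l k.+1) ->
  forall k, k < n -> l k = k.+1.
Proof.
case=> _ _ labrng _ labx l_incr; apply: increasing_bounded_succ => // k kn.
by have [v vT <-] := is_label_vertex (labx k kn); exact: labrng.
Qed.

Lemma chain_image T n lab (x : nat -> {set {set I}}) :
  is_forest T -> nice_labeling T n lab -> x 0 = set0 ->
  (forall k, k <= n -> is_forest (x k)) ->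
  (forall k, k < n -> is_label T lab (x k) (x k.+1) k.+1) ->
  forall k phi, k <= n -> embedding (x k) T phi -> phi @: x k = lab_downset T lab k.
Proof.
move=> fT nl x0 fx labx; elim=> [|k IH] phi kn ephi.
  by rewrite x0 imset0 (lab_downset0 nl).
have [phiF [v [eF vT lv ->]]] := is_label_image (fx _ kn) fT (labx k kn) ephi.
by rewrite (IH _ (ltnW kn) eF) (lab_downsetS _ vT lv) //; case: nl.
Qed.

End Forests.

Theorem lemma5p4 (I : finType) (T : {set {set I}}) (n : nat)
    (lab : {set I} -> nat) (x : nat -> {set {set I}}) (l : nat -> nat)
    (a : nat -> {set {set I}}) (i : nat) :
  is_tree T ->
  nice_labeling T n lab ->
  (* x_0 <| x_1 <| ... <| x_n is a maximal chain of [0,T] *)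
  x 0 = set0 -> x n = T ->
  (forall k, k <= n -> is_forest (x k) /\ le_forest (x k) T) ->
  (forall k, k < n -> covers (x k) (x k.+1)) ->
  (* with increasing labels l 0 < l 1 < ... < l (n-1) *)
  (forall k, k < n -> is_label T lab (x k) (x k.+1) (l k)) ->
  (forall k, k.+1 < n -> l k < l k.+1) ->
  0 < i <= n ->
  (* a_j in B_j for j in [i] *)
  (forall j, 0 < j <= i ->
     [/\ le_forest (a j) T, covers set0 (a j) & is_label T lab set0 (a j) j]) ->
  is_join_in T a i (x i).
Proof.
move=> tT nl x0 _ fx _ labx l_incr /andP[_ le_in] ha.
have fT : is_forest T by case/andP: tT.
have labx_succ k : k < n -> is_label T lab (x k) (x k.+1) k.+1.
  by move=> kn; have := labx k kn; rewrite (chain_labels_succ nl labx l_incr kn).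
have [fxi [psi epsi]] := fx i le_in.
have xiE : x i = lab_downset T lab i.
  apply: (embedding_image_eq fxi fT epsi (lab_downset_closed nl)).
  exact: chain_image fT nl x0 (fun k kn => (fx k kn).1) labx_succ i psi le_in epsi.
split => //; first by exists psi.
  by move=> j /[dup] /andP[_ ji] /ha[_ _ laj]; rewrite xiE; exact: atom_le_lab_downset nl laj ji.
move=> y fy [chi ech] hy; rewrite xiE.
apply: (down_closed_le fy fT ech (lab_downset_sub _ _ _) (lab_downset_closed nl)).
apply/subsetP=> w; rewrite inE => /andP[wT wi].
have [_ labinj labrng _] := nl.
have hj : 0 < lab w <= i by rewrite wi andbT; case/andP: (labrng w wT).
have [_ [_ fa _ _ _] law] := ha _ hj.
exact: atom_vertex_in_image fa fT labinj law (hy _ hj) ech wT erefl.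
Qed.
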